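(* Let $\delta_q$ satisfy $0<\delta_q<\min\left\{\frac{\sqrt2-1}{|\lambda_1|},\frac{2}{|\lambda_1-\lambda_{\max}|}\right\}$ and set $\delta_e=\min\{\delta^*,\delta_q\}$. Then for all $U\in B(V_*,\eta_a)\cap(\mathcal{V}_0)^N\cap\mathcal{M}_{\leqslant}^{N;N_g}$ and all $s\in[0,\delta_e]$, $$E(U)-E(g(U,s))\geqslant s\Big(\frac12-\frac{s}{2}|\lambda_1|\Big)\Big\|\mathcal{A}_{\frac{\hat g(U,s)+U}{2}}\frac{\hat g(U,s)+U}{2}\Big\|^2.$$
   Context: Let $\mathcal{V}^{N_g}$ be a real Hilbert space of finite dimension $N_g$ with inner product $(\cdot,\cdot)$ (in the paper a finite element subspace of $H_0^1(\Omega)$ with the $L^2(\Omega)$ inner product), and let $H:\mathcal{V}^{N_g}\to\mathcal{V}^{N_g}$ be a self-adjoint linear operator with eigenvalues $\lambda_1\leqslant\lambda_2\leqslant\cdots\leqslant\lambda_{N_g}$, $\lambda_{\max}=\lambda_{N_g}$; it is assumed that $\lambda_1<0$. Fix $N<N_g$ with $\lambda_N<\lambda_{N+1}$. Elements of $(\mathcal{V}^{N_g})^N$ are written $U=(u_1,\dots,u_N)$; $U^\top V=((u_i,v_j))_{i,j=1}^N$; for a real $N\times N$ matrix $A=(a_{kj})$, $UA$ is the element whose $j$-th component is $\sum_k a_{kj}u_k$; $HU=(Hu_1,\dots,Hu_N)$; $\|U\|=\operatorname{tr}(U^\top U)^{1/2}$. For symmetric matrices, $A\leqslant B$ means $B-A$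 is positive semidefinite and $A>0$ positive definite. Set $E(U)=\frac12\operatorname{tr}(U^\top HU)$ and $\nabla E(U)=HU$. For $U$, $\mathcal{A}_U=\nabla E(U)U^\top-U\nabla E(U)^\top$ is the linear operator on $\mathcal{V}^{N_g}$ given by $\mathcal{A}_Uw=\sum_{i=1}^N\big(Hu_i\,(u_i,w)-u_i\,(Hu_i,w)\big)$, applied componentwise. Quasi-Stiefel set: $\mathcal{M}_{\leqslant}^{N;N_g}=\{U:0<U^\top U\leqslant I_N\}$. Let $V_*\in(\mathcal{V}^{N_g})^N$ with $V_*^\top V_*=I_N$ and $HV_*=V_*\operatorname{diag}(\lambda_1,\dots,\lambda_N)$. $\mathcal{O}^N$ is the set of $N\times N$ orthogonal matrices, $\operatorname{dist}([U],[V_*])=\inf_{Q\in\mathcal{O}^N}\|UQ-V_*\|$, $B(U,\eta)=\{W:\|W-U\|\leqslant\eta\}$, $B([V_*],\eta)=\{W:\operatorname{dist}([W],[V_*])\leqslant\eta\}$. For $j=1,\dots,N$, let $\mathcal{V}_{0_j}=\operatorname{span}\{v_{j,1},\dots,v_{j,d_j}\}$ ($d_j\geqslant1$) with each $v_{j,k}$ an eigenvector of $H$, $(\mathcal{V}_0)^N=\mathcal{V}_{0_1}\times\cdots\times\mathcal{V}_{0_N}$, and $\lambda_{\max}^0=\max_{j,k}\frac{(v_{j,k},Hv_{j,k})}{(v_{j,k},v_{j,k})}$. Standing assumption: $\lambda_{\max}^0\leqslant0$. Fix constants $\eta_a,\eta_b,\delta^*>0$ such that (as asserted in the paper) there is a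 unique function $\hat g:B(V_*,\eta_a)\times[0,\delta^*]\to B(V_*,\eta_b)$ with $\hat g(U,s)-U=-s\,\mathcal{A}_{\frac{\hat g(U,s)+U}{2}}\frac{\hat g(U,s)+U}{2}$, and a unique function $g:B([V_*],\eta_a)\times[0,\delta^*]\to B([V_*],\eta_b)$ with $g(U,s)=\hat g(U,s)-s\nabla E(\hat g(U,s))\big(I_N-\hat g(U,s)^\top\hat g(U,s)\big)$ (extended from $B(V_*,\eta_a)$ by $g(UQ,s)=g(U,s)Q$, $Q\in\mathcal{O}^N$). One step of the quasi-orthogonal scheme $\hat U_{n+1}=U_n-s_n\mathcal{A}_{\tilde U}\tilde U$, $\tilde U=\frac{U_n+\hat U_{n+1}}2$, $U_{n+1}=\hat U_{n+1}-s_nH\hat U_{n+1}(I_N-\hat U_{n+1}^\top\hat U_{n+1})$ is given by $\hat U_{n+1}=\hat g(U_n,s_n)$, $U_{n+1}=g(U_n,s_n)$. *)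

(* finite-dimensional real Hilbert space V^{Ng} modelled in
   orthonormal coordinates as column vectors 'cV[R]_Ng with the standard
   inner product (x,y) = (x^T y); elements of (V^{Ng})^N are Ng x N matrices
   whose j-th column is u_j. *)
From mathcomp Require Import all_boot all_order all_algebra.
From mathcomp Require Import reals.
Set Implicit Arguments. Unset Strict Implicit. Unset Printing Implicit Defensive.
Import Order.TTheory GRing.Theory Num.Theory.
Local Open Scope ring_scope.

Section Defs.
Variable R : realType.

Definition ip (n : nat) (x y : 'cV[R]_n) : R := (x^T *m y) 0 0.

Definition normF (n m : nat) (U : 'M[R]_(n, m)) : R := Num.sqrt (\tr (U^T *m U)).

Definition energy (n m : nat) (H : 'M[R]_n) (U : 'M[R]_(n, m)) : R :=
  2^-1 * \tr (U^T *m (H *m U)).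

(* A_U = grad E(U) U^T - U grad E(U)^T, with grad E(U) = H U, as an operator
   (matrix) on V^{Ng}; A_U W is then  Aop H U *m W  (componentwise). *)
Definition Aop (n m : nat) (H : 'M[R]_n) (U : 'M[R]_(n, m)) : 'M[R]_n :=
  (H *m U) *m U^T - U *m (H *m U)^T.

Definition psdmx (m : nat) (A : 'M[R]_m) : Prop :=
  A^T = A /\ forall x : 'cV[R]_m, 0 <= (x^T *m A *m x) 0 0.
Definition pdmx (m : nat) (A : 'M[R]_m) : Prop :=
  A^T = A /\ forall x : 'cV[R]_m, x != 0 -> 0 < (x^T *m A *m x) 0 0.

Definition quasi_stiefel (n m : nat) (U : 'M[R]_(n, m)) : Prop :=
  pdmx (U^T *m U) /\ psdmx (1%:M - U^T *m U).

Definition ball_mx (n m : nat) (V : 'M[R]_(n, m)) (eta : R) (W : 'M[R]_(n, m)) : Prop :=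
  normF (W - V) <= eta.

Definition midmx (n m : nat) (W U : 'M[R]_(n, m)) : 'M[R]_(n, m) := 2^-1 *: (W + U).

Definition g_of (n m : nat) (H : 'M[R]_n) (ghat : 'M[R]_(n, m) -> R -> 'M[R]_(n, m))
  (U : 'M[R]_(n, m)) (s : R) : 'M[R]_(n, m) :=
  ghat U s - s *: ((H *m ghat U s) *m (1%:M - (ghat U s)^T *m ghat U s)).

Definition rayleigh (n : nat) (H : 'M[R]_n) (v : 'cV[R]_n) : R :=
  ip v (H *m v) / ip v v.

End Defs.

(* Put W = ghat(U,s), M = (W + U)/2 and A = A_M, so that W - U = -s A M with A
   skew-symmetric.  Skewness makes the Cayley-type step preserve the Gram matrix,
   W^T W = U^T U, and gives E(U) - E(W) = s tr(M^T H A M) = (s/2) ||A||_F^2, which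
   is at least (s/2) ||A M||^2 because M^T M <= U^T U <= I.  The correction
   g = W - s H W D with D = I - W^T W, 0 <= D <= I, does not increase the energy
   when s lambda_max <= 2: with Y = H W D, E(W) - E(g) = s tr(W^T H Y) - (s^2/2)
   tr(Y^T H Y), where tr(Y^T H Y) <= lambda_max tr(Y^T Y) and
   0 <= tr(Y^T Y) <= tr(W^T H Y) because D^2 <= D.  So E(U) - E(g) >= (s/2)||A M||^2,
   which dominates the claimed bound. *)

From mathcomp Require Import all_boot all_order all_algebra.
From mathcomp Require Import reals.
From mathcomp Require Import lra.
Set Implicit Arguments. Unset Strict Implicit. Unset Printing Implicit Defensive.
Import Order.TTheory GRing.Theory Num.Theory.
Local Open Scope ring_scope.

Section QuadraticForms.
Variable R : realFieldType.

Definition qform n (Q : 'M[R]_n) (x : 'cV[R]_n) : R := (x^T *m Q *m x) 0 0.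

Lemma qform1_ge0 n (x : 'cV[R]_n) : 0 <= qform 1%:M x.
Proof.
rewrite /qform mulmx1 mxE; apply: sumr_ge0 => i _.
by rewrite mxE -expr2 sqr_ge0.
Qed.

Lemma qformD n (Q Q' : 'M[R]_n) x : qform (Q + Q') x = qform Q x + qform Q' x.
Proof.
rewrite /qform mulmxDr mulmxDl.
(* Generalizing the products keeps [mxE] from unfolding them into sums. *)
by move: (x^T *m Q *m x) (x^T *m Q' *m x) => a b; rewrite !mxE.
Qed.

Lemma qformB n (Q Q' : 'M[R]_n) x : qform (Q - Q') x = qform Q x - qform Q' x.
Proof.
rewrite /qform mulmxBr mulmxBl.
by move: (x^T *m Q *m x) (x^T *m Q' *m x) => a b; rewrite !mxE.
Qed.

Lemma qform_tmul n m (M : 'M[R]_(n, m)) x : qform (M^T *m M) x = qform 1%:M (M *m x).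
Proof. by rewrite /qform mulmx1 trmx_mul !mulmxA. Qed.

Lemma mxtrace_qform n m (Q : 'M[R]_n) (Y : 'M[R]_(n, m)) :
  \tr (Y^T *m Q *m Y) = \sum_j qform Q (col j Y).
Proof.
rewrite /mxtrace; apply: eq_bigr => j _.
rewrite /qform colE trmx_mul trmx_delta !mulmxA -!rowE -colE !mxE.
by apply: eq_bigr => k _; rewrite -row_mul !mxE.
Qed.

Lemma ler_mxtrace_qform n m (Q Q' : 'M[R]_n) (Y : 'M[R]_(n, m)) :
  (forall x, qform Q x <= qform Q' x) -> \tr (Y^T *m Q *m Y) <= \tr (Y^T *m Q' *m Y).
Proof. by move=> le_QQ'; rewrite !mxtrace_qform; apply: ler_sum. Qed.

Lemma mxtrace_qform_ge0 n m (Q : 'M[R]_n) (Y : 'M[R]_(n, m)) :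
  (forall x, 0 <= qform Q x) -> 0 <= \tr (Y^T *m Q *m Y).
Proof. by move=> Q_ge0; rewrite mxtrace_qform; apply: sumr_ge0. Qed.

Lemma mxtrace_tmul_ge0 n m (Y : 'M[R]_(n, m)) : 0 <= \tr (Y^T *m Y).
Proof. by rewrite -[Y^T]mulmx1; apply/mxtrace_qform_ge0/qform1_ge0. Qed.

Lemma qform_scalar_mx n c (x : 'cV[R]_n) : qform c%:M x = c * qform 1%:M x.
Proof.
rewrite /qform mul_mx_scalar -scalemxAl !mulmx1.
by move: (x^T *m x) => a; rewrite mxE.
Qed.

Lemma qform_contraction_tr n m (M : 'M[R]_(n, m)) :
  (forall x, qform (M^T *m M) x <= qform 1%:M x) ->
  forall y, qform (M *m M^T) y <= qform 1%:M y.
Proof.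
move=> M_contr y; set z := M^T *m y.
have := M_contr z; have := qform1_ge0 (y - M *m z).
have -> : qform (M *m M^T) y = qform 1%:M z by rewrite -[M in M *m _]trmxK qform_tmul.
have cross1 : y^T *m (M *m z) = z^T *m z by rewrite /z trmx_mul trmxK mulmxA.
have cross2 : (M *m z)^T *m y = z^T *m z by rewrite trmx_mul -mulmxA.
rewrite qform_tmul /qform !mulmx1 !linearB /= !mulmxBl cross1 cross2.
move: (y^T *m y) (z^T *m z) ((M *m z)^T *m (M *m z)) => a b c; rewrite !mxE; lra.
Qed.

Lemma qform_sqr_le n (D : 'M[R]_n) :
  D^T = D -> (forall x, 0 <= qform D x) -> (forall x, qform D x <= qform 1%:M x) ->
  forall y, qform (D *m D) y <= qform D y.
Proof.
move=> D_sym D_ge0 D_le1 y; set z := D *m y.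
have := D_le1 z; have := D_ge0 (y - z).
have -> : qform (D *m D) y = qform 1%:M z by rewrite -[D in D *m _]D_sym qform_tmul.
have cross1 : y^T *m D *m z = z^T *m z by rewrite /z trmx_mul D_sym mulmxA.
have cross2 : z^T *m D *m y = z^T *m z by rewrite -mulmxA.
rewrite /qform !mulmx1 !linearB /= !mulmxBl cross1 cross2.
move: (y^T *m D *m y) (z^T *m z) (z^T *m D *m z) => a b c; rewrite !mxE; lra.
Qed.

Lemma qform_le_spectral n (H P : 'M[R]_n) (lam : nat -> R) c :
  P^T *m P = 1%:M -> H = P *m diag_mx (\row_(i < n) lam i) *m P^T ->
  (forall i : 'I_n, lam i <= c) -> forall x, qform H x <= c * qform 1%:M x.
Proof.
move=> P_orth H_diag lam_le x; set y := P^T *m x.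
have -> : qform 1%:M x = qform 1%:M y.
  by rewrite /y -qform_tmul trmxK (mulmx1C P_orth).
have -> : qform H x = qform (diag_mx (\row_(i < n) lam i)) y.
  by rewrite /qform H_diag /y trmx_mul trmxK !mulmxA.
clearbody y; rewrite /qform mulmx1 mul_mx_diag !mxE mulr_sumr; apply: ler_sum => i _.
rewrite !mxE; have := lam_le i; have := sqr_ge0 (y i 0); rewrite expr2; nra.
Qed.

End QuadraticForms.

Section QuasiOrthogonalStep.
Variable R : realType.

Lemma midmx_quad_diff n m (K : 'M[R]_n) (W U : 'M[R]_(n, m)) :
  W^T *m K *m W - U^T *m K *m U =
  (midmx W U)^T *m K *m (W - U) + (W - U)^T *m K *m midmx W U.
Proof.
rewrite /midmx ![(_ *: _)^T]linearZ /= ![(_ + _)^T]linearD /= ![(- _)^T]linearN /=.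
rewrite -!scalemxAl -!scalemxAr.
rewrite !mulmxDl !mulNmx !mulmxDr !mulmxN.
move: (W^T *m K *m W) (W^T *m K *m U) (U^T *m K *m W) (U^T *m K *m U) => a b c e.
apply/matrixP => i j; rewrite !mxE; lra.
Qed.

Lemma midmx_parallelogram n m (W U : 'M[R]_(n, m)) :
  (midmx W U)^T *m midmx W U + (2^-1 *: (W - U))^T *m (2^-1 *: (W - U)) =
  2^-1 *: (W^T *m W + U^T *m U).
Proof.
rewrite /midmx ![(_ *: _)^T]linearZ /= ![(_ + _)^T]linearD /= ![(- _)^T]linearN /=.
rewrite -!scalemxAl -!scalemxAr.
rewrite !mulmxDl !mulNmx !mulmxDr !mulmxN.
move: (W^T *m W) (W^T *m U) (U^T *m W) (U^T *m U) => a b c e.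
apply/matrixP => i j; rewrite !mxE; lra.
Qed.

Lemma midmx_contraction n m (W U : 'M[R]_(n, m)) :
  W^T *m W = U^T *m U -> psdmx (1%:M - U^T *m U) ->
  forall x, qform ((midmx W U)^T *m midmx W U) x <= qform 1%:M x.
Proof.
move=> gram [_ U_le1] x; set Z := 2^-1 *: (W - U).
have U_split : U^T *m U = (midmx W U)^T *m midmx W U + Z^T *m Z.
  rewrite /Z midmx_parallelogram gram; move: (U^T *m U) => B.
  by apply/matrixP => i j; rewrite !mxE; lra.
have := U_le1 x; have := qform1_ge0 (Z *m x).
rewrite -/(qform _ x) qformB U_split qformD -qform_tmul; lra.
Qed.

Lemma normF_mulmx_le p n m (A : 'M[R]_(p, n)) (M : 'M[R]_(n, m)) :
  (forall x, qform (M^T *m M) x <= qform 1%:M x) ->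
  normF (A *m M) ^+ 2 <= \tr (A^T *m A).
Proof.
move=> M_contr; rewrite /normF sqr_sqrtr ?mxtrace_tmul_ge0 //.
have -> : \tr ((A *m M)^T *m (A *m M)) = \tr (A^T^T *m (M *m M^T) *m A^T).
  by rewrite trmx_mul trmxK mxtrace_mulC !mulmxA.
have -> : \tr (A^T *m A) = \tr (A^T^T *m 1%:M *m A^T) by rewrite trmxK mulmx1 mxtrace_mulC.
exact: ler_mxtrace_qform (qform_contraction_tr M_contr).
Qed.

Section SymmetricHamiltonian.
Variables (n m : nat) (H : 'M[R]_n).
Hypothesis H_sym : H^T = H.

Lemma Aop_skew (M : 'M[R]_(n, m)) : (Aop H M)^T = - Aop H M.
Proof. by rewrite /Aop raddfB /= !trmx_mul !trmxK H_sym opprB. Qed.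

Lemma mxtrace_Aop_tmul (M : 'M[R]_(n, m)) :
  \tr ((Aop H M)^T *m Aop H M) = 2 * \tr (M^T *m H *m Aop H M *m M).
Proof.
set A := Aop H M.
have tr1 : \tr (A *m (H *m M *m M^T)) = - \tr (M^T *m H *m A *m M).
  rewrite !mulmxA mxtrace_mulC -mxtrace_tr !trmx_mul !trmxK H_sym Aop_skew.
  by rewrite !mulmxN mulNmx !mulmxA raddfN.
have tr2 : \tr (A *m (M *m (H *m M)^T)) = \tr (M^T *m H *m A *m M).
  by rewrite trmx_mul H_sym !mulmxA mxtrace_mulC !mulmxA mxtrace_mulC !mulmxA.
rewrite Aop_skew mulNmx raddfN {2}/A /Aop mulmxBr raddfB /= tr1 tr2; lra.
Qed.

Lemma cayley_step_gram s (W U : 'M[R]_(n, m)) :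
  W - U = - (s *: (Aop H (midmx W U) *m midmx W U)) -> W^T *m W = U^T *m U.
Proof.
move=> step; apply/eqP; rewrite -subr_eq0 -[W^T]mulmx1 -[U^T]mulmx1.
rewrite midmx_quad_diff step !mulmx1.
move: (midmx W U) => M; move: (Aop H M) (Aop_skew M) => A A_skew.
rewrite mulmxN -scalemxAr [(- _)^T]raddfN /= [(_ *: _)^T]linearZ /= trmx_mul A_skew.
by rewrite mulmxN scalerN !mulNmx opprK -scalemxAl mulmxA addNr.
Qed.

Lemma mxtrace_form_sym (X Y : 'M[R]_(n, m)) :
  \tr (X^T *m H *m Y) = \tr (Y^T *m H *m X).
Proof. by rewrite -mxtrace_tr !trmx_mul trmxK H_sym !mulmxA. Qed.

Lemma cayley_step_energy s (W U : 'M[R]_(n, m)) :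
  W - U = - (s *: (Aop H (midmx W U) *m midmx W U)) ->
  energy H U - energy H W =
  s / 2 * \tr ((Aop H (midmx W U))^T *m Aop H (midmx W U)).
Proof.
move=> step; rewrite mxtrace_Aop_tmul.
have tr_diff := congr1 mxtrace (midmx_quad_diff H W U).
rewrite [\tr (_ - _)]raddfB mxtraceD (mxtrace_form_sym (W - U)) step in tr_diff.
rewrite -scaleNr -scalemxAr mxtraceZ in tr_diff.
rewrite /energy !mulmxA in tr_diff *; lra.
Qed.

Lemma energy_subZ s (W Y : 'M[R]_(n, m)) :
  energy H (W - s *: Y) =
  energy H W - s * \tr (W^T *m H *m Y) + s ^+ 2 / 2 * \tr (Y^T *m H *m Y).
Proof.
rewrite /energy !mulmxA [(_ - _)^T]raddfB /= [(_ *: _)^T]linearZ /=.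
rewrite !mulmxBl !mulmxBr -!scalemxAl -!scalemxAr !raddfB /= !mxtraceZ.
rewrite (mxtrace_form_sym Y W); lra.
Qed.

Lemma energy_correction_le s lmax (W : 'M[R]_(n, m)) :
  psdmx (1%:M - W^T *m W) -> (forall x, qform H x <= lmax * qform 1%:M x) ->
  0 <= s -> s * lmax <= 2 ->
  energy H (W - s *: (H *m W *m (1%:M - W^T *m W))) <= energy H W.
Proof.
move=> [D_sym D_ge0] H_le s_ge0 s_lmax.
set D := 1%:M - W^T *m W in D_sym D_ge0 *; set G := H *m W; set Y := G *m D.
have D_le1 x : qform D x <= qform 1%:M x.
  by rewrite qformB qform_tmul; have := qform1_ge0 (W *m x); lra.
have lin_eq : \tr (W^T *m H *m Y) = \tr (G^T^T *m D *m G^T).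
  by rewrite mxtrace_mulC trmxK /Y trmx_mul H_sym !mulmxA.
have lin_ge0 : 0 <= \tr (W^T *m H *m Y) by rewrite lin_eq; exact: mxtrace_qform_ge0.
have sqr_le : \tr (Y^T *m Y) <= \tr (W^T *m H *m Y).
  have -> : \tr (Y^T *m Y) = \tr (G^T^T *m (D *m D) *m G^T).
    by rewrite /Y trmx_mul D_sym trmxK mxtrace_mulC !mulmxA.
  by rewrite lin_eq; apply: ler_mxtrace_qform; apply: qform_sqr_le.
have quad_le : \tr (Y^T *m H *m Y) <= lmax * \tr (Y^T *m Y).
  rewrite -mxtraceZ scalemxAl -mul_mx_scalar.
  by apply: ler_mxtrace_qform => x; rewrite qform_scalar_mx.
have sY_le : s * lmax * (s * \tr (Y^T *m Y)) <= 2 * (s * \tr (Y^T *m Y)).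
  by apply: ler_wpM2r => //; apply: mulr_ge0 => //; exact: mxtrace_tmul_ge0.
rewrite energy_subZ.
move: sY_le (ler_wpM2l (sqr_ge0 s) quad_le) (ler_wpM2l s_ge0 sqr_le).
move: (\tr (Y^T *m Y)) (\tr (Y^T *m H *m Y)) => y q; nra.
Qed.

End SymmetricHamiltonian.

End QuasiOrthogonalStep.

Lemma mul_le2_of_lt_div_dist (R : realFieldType) (a b s : R) :
  a <= 0 -> a <= b -> 0 <= s -> s < 2 / `|a - b| -> s * b <= 2.
Proof.
move=> a_le0 a_le_b s_ge0 s_lt.
have [b_le0|b_gt0] := lerP b 0; first by nra.
rewrite distrC ger0_norm ?subr_ge0 // ltr_pdivlMr in s_lt; nra.
Qed.

Theorem lemma4p3 (R : realType) (Ng N : nat)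
  (H : 'M[R]_Ng) (lam : nat -> R) (P : 'M[R]_Ng)
  (* H self-adjoint with eigenvalues lam 0 <= ... <= lam (Ng-1) (0-based:
     lam i = lambda_{i+1}), diagonalized in an orthonormal eigenbasis P *)
  (HHsym : H^T = H)
  (HPorth : P^T *m P = 1%:M)
  (HHdiag : H = P *m diag_mx (\row_(i < Ng) lam i) *m P^T)
  (Hsorted : forall i j : nat, (i <= j < Ng)%N -> lam i <= lam j)
  (HN : (0 < N < Ng)%N)
  (Hlam1 : lam 0%N < 0)
  (Hgap : lam N.-1 < lam N)
  (* V_* *)
  (Vs : 'M[R]_(Ng, N))
  (HVs1 : Vs^T *m Vs = 1%:M)
  (HVs2 : H *m Vs = Vs *m diag_mx (\row_(i < N) lam i))
  (* the spaces V_{0_j} = span {v_{j,1},...,v_{j,d_j}} of eigenvectors *)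
  (d : 'I_N -> nat) (Hd : forall j, (0 < d j)%N)
  (v : forall j : 'I_N, 'I_(d j) -> 'cV[R]_Ng)
  (Hv_eig : forall j k, v j k != 0 /\ exists mu : R, H *m v j k = mu *: v j k)
  (* standing assumption lambda^0_max <= 0 *)
  (Hlam0max : forall j k, rayleigh H (v j k) <= 0)
  (* constants and the functions ghat, g *)
  (eta_a eta_b delta_star : R)
  (Heta_a : 0 < eta_a) (Heta_b : 0 < eta_b) (Hdelta_star : 0 < delta_star)
  (ghat : 'M[R]_(Ng, N) -> R -> 'M[R]_(Ng, N))
  (Hghat_ex : forall U s, ball_mx Vs eta_a U -> 0 <= s <= delta_star ->
     ball_mx Vs eta_b (ghat U s) /\
     ghat U s - U = - (s *: (Aop H (midmx (ghat U s) U) *m midmx (ghat U s) U)))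
  (Hghat_uniq : forall U s W, ball_mx Vs eta_a U -> 0 <= s <= delta_star ->
     ball_mx Vs eta_b W ->
     W - U = - (s *: (Aop H (midmx W U) *m midmx W U)) -> W = ghat U s)
  (* delta_q and delta_e *)
  (delta_q : R)
  (Hdq : 0 < delta_q < Num.min ((Num.sqrt 2 - 1) / `|lam 0%N|)
                                (2 / `|lam 0%N - lam Ng.-1|))
  (delta_e := Num.min delta_star delta_q) :
  forall (U : 'M[R]_(Ng, N)) (s : R),
    ball_mx Vs eta_a U ->
    (forall j : 'I_N, exists c : 'I_(d j) -> R,
        col j U = \sum_(k < d j) c k *: v j k) ->
    quasi_stiefel U ->
    0 <= s <= delta_e ->
    energy H U - energy H (g_of H ghat U s) >=
      s * (2^-1 - s / 2 * `|lam 0%N|) *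
      normF (Aop H (midmx (ghat U s) U) *m midmx (ghat U s) U) ^+ 2.
Proof.
move=> U s U_ball _ U_qs /andP[s_ge0]; rewrite le_min => /andP[s_le_dstar s_le_dq].
have [_ step] := Hghat_ex U s U_ball (introT andP (conj s_ge0 s_le_dstar)).
rewrite /g_of; set W := ghat U s in step *.
have gram := cayley_step_gram HHsym step.
have Ng_gt0 : (0 < Ng)%N by case/andP: HN => N_gt0; apply: ltn_trans.
have lam_le_max (i : 'I_Ng) : lam i <= lam Ng.-1.
  by apply: Hsorted; rewrite -ltnS prednK // ltn_ord leqnn.
have s_lmax : s * lam Ng.-1 <= 2.
  case/andP: Hdq => _; rewrite lt_min => /andP[_ dq_lt].
  apply: mul_le2_of_lt_div_dist (ltW Hlam1) (lam_le_max (Ordinal Ng_gt0)) s_ge0 _.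
  exact: le_lt_trans s_le_dq dq_lt.
have W_le1 : psdmx (1%:M - W^T *m W) by rewrite gram; exact: U_qs.2.
have correction := energy_correction_le HHsym W_le1
  (qform_le_spectral HPorth HHdiag lam_le_max) s_ge0 s_lmax.
have AM_le := normF_mulmx_le (Aop H (midmx W U)) (midmx_contraction gram U_qs.2).
have := ler_wpM2l (divr_ge0 s_ge0 (ler0n _ 2)) AM_le.
have := mulr_ge0 (mulr_ge0 (mulr_ge0 s_ge0 s_ge0) (normr_ge0 (lam 0%N)))
  (sqr_ge0 (normF (Aop H (midmx W U) *m midmx W U))).
have := cayley_step_energy HHsym step; lra.
Qed.
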